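(* For $n\in\mathbb{N}_{\geq 1}$ let $c_n$ denote the minimal Colless index among all rooted binary trees with $n$ leaves, and let $k_n=\lceil\log_2(n)\rceil$. Then $$c_n=\sum_{i=0}^{k_n-2}\frac{s(2^{i-k_n+1}\cdot n)}{2^{i-k_n+1}},$$ where $s(x)=\min_{z\in\mathbb{Z}}|x-z|$ is the distance from $x$ to the nearest integer (an empty sum is $0$).
   Context: A rooted binary tree with $n\geq 2$ leaves is a rooted tree whose root has degree 2 and all other internal nodes have degree 3; for $n=1$ it is a single node. For an internal node $v$ with children $v_1,v_2$, let $\kappa(v_i)$ be the number of leaves descending from $v_i$ ($1$ if $v_i$ is a leaf). The Colless index of $T$ is $\mathcal{C}(T)=\sum_{v}|\kappa(v_1)-\kappa(v_2)|$ over all internal nodes $v$. *)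

From mathcomp Require Import all_boot all_order all_algebra.
Set Implicit Arguments. Unset Strict Implicit. Unset Printing Implicit Defensive.
Import Order.TTheory GRing.Theory Num.Theory.

Inductive bintree : Type :=
| Leaf : bintree
| Node : bintree -> bintree -> bintree.

Fixpoint leaves (t : bintree) : nat :=
  match t with
  | Leaf => 1
  | Node l r => leaves l + leaves r
  end.

Fixpoint colless (t : bintree) : nat :=
  match t with
  | Leaf => 0
  | Node l r => absz (Posz (leaves l) - Posz (leaves r)) + colless l + colless r
  end.

Definition min_colless (n : nat) (c : nat) : Prop :=
  (exists t, leaves t = n /\ colless t = c) /\
  (forall t, leaves t = n -> c <= colless t).

Local Open Scope ring_scope.

Definition sdist (x : rat) : rat :=
  Num.min (x - (Num.floor x)%:~R) ((Num.ceil x)%:~R - x).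

(* k_n = ceil(log2 n) : the least e with n <= 2^e (for n >= 1) *)
Definition kn (n : nat) : nat := up_log 2 n.

Definition colless_formula (n : nat) : rat :=
  \sum_(0 <= i < kn n - 1)
     sdist ((2%:Q ^ (Posz i - Posz (kn n) + 1)) * n%:R)
       / (2%:Q ^ (Posz i - Posz (kn n) + 1)).

From mathcomp Require Import all_boot all_order all_algebra zify lra.
Import Order.TTheory GRing.Theory Num.Theory.

(* Writing [moddist d n] for the distance from [n] to the nearest multiple
   of [d], the [i]-th summand of the formula is [moddist (2 ^ j) n] with
   [j = k_n - 1 - i], so the formula is [cmin n], the sum of these distances
   over [j < k_n].  [cmin] satisfies [cmin (2m) = 2 cmin m] and
   [cmin (2m+1) = cmin m + cmin (m+1) + 1], which is exactly the recursion of
   the Colless index of the maximally balanced tree, so [cmin n] is attained.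
   Minimality follows from [cmin (a + b) <= cmin a + cmin b + |a - b|], proved
   by strong induction on [a + b] with a case split on the parities of [a]
   and [b]. *)

Definition moddist (d n : nat) : nat := minn (n %% d) (d - n %% d).

Lemma moddist1 n : moddist 1 n = 0.
Proof. by rewrite /moddist modn1. Qed.

Lemma moddistMl k d n : moddist (k * d) (k * n) = k * moddist d n.
Proof. by rewrite /moddist -muln_modr -mulnBr minnMr. Qed.

Lemma moddist2_odd m : moddist 2 (2 * m).+1 = 1.
Proof. by rewrite /moddist -addn1 [2 * m]mulnC modnMDl. Qed.

Lemma moddist_odd d m : 0 < d ->
  moddist (4 * d) (2 * m).+1 = moddist (2 * d) m + moddist (2 * d) m.+1.
Proof.
move=> d_gt0; rewrite /moddist (divn_eq m (2 * d)).
set q := m %/ (2 * d); set r := m %% (2 * d).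
have r_lt : r < 2 * d by rewrite ltn_pmod // muln_gt0.
have -> : (2 * (q * (2 * d) + r)).+1 = q * (4 * d) + (2 * r).+1 by lia.
have odd_lt : (2 * r).+1 < 4 * d by lia.
rewrite !modnMDl (modn_small r_lt) (modn_small odd_lt).
case: (ltnP r.+1 (2 * d)) => r_succ.
  by rewrite -addnS modnMDl modn_small //; lia.
have -> : (q * (2 * d) + r).+1 = q.+1 * (2 * d) by lia.
by rewrite modnMl; lia.
Qed.

Definition cmin (n : nat) : nat := \sum_(0 <= j < up_log 2 n) moddist (2 ^ j) n.

Lemma cmin0 : cmin 0 = 0.
Proof. by rewrite /cmin up_log0 big_geq. Qed.

Lemma cmin1 : cmin 1 = 0.
Proof. by rewrite /cmin up_log1 big_geq. Qed.

Lemma cmin_double m : cmin (2 * m) = 2 * cmin m.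
Proof.
have [->|m_gt0] := posnP m; first by rewrite cmin0.
rewrite /cmin up_logMp // big_nat_recl // moddist1 add0n big_distrr.
by apply: eq_bigr => j _; rewrite expnS moddistMl.
Qed.

(* If [up_log 2 m.+1 > up_log 2 m] then [m] is a power of two, and the extra
   summand vanishes. *)
Lemma sum_moddist_up_log_succ m : 0 < m ->
  \sum_(0 <= j < up_log 2 m.+1) moddist (2 ^ j) m = cmin m.
Proof.
move=> m_gt0; rewrite /cmin; set k := up_log 2 m.
have := up_logP m (isT : 1 < 2); rewrite -/k leq_eqVlt => /orP[/eqP m_eq|m_lt].
  have -> : up_log 2 m.+1 = k.+1.
    by apply: up_log_eq => //; rewrite -m_eq ltnSn /= expnS; lia.
  by rewrite big_nat_recr //= {2}m_eq /moddist modnn min0n addn0.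
suff -> : up_log 2 m.+1 = k by [].
by apply/anti_leq; rewrite up_log_min // leq_up_log.
Qed.

Lemma cmin_odd m : 0 < m -> cmin (2 * m).+1 = cmin m + cmin m.+1 + 1.
Proof.
move=> m_gt0; rewrite [LHS]/cmin up_log2S ?muln_gt0 // [in (2 * m)./2]mul2n doubleK.
have : 0 < up_log 2 m.+1 by rewrite up_log_gt0 ltnS.
case Ek: (up_log 2 m.+1) => [//|k] _.
rewrite big_nat_recl // moddist1 add0n big_nat_recl // moddist2_odd.
under eq_bigr => j _ do rewrite !expnS mulnA moddist_odd ?expn_gt0 // -expnS.
rewrite big_split /= -(@sum_moddist_up_log_succ m m_gt0) /cmin Ek.
rewrite !(big_nat_recl k) // !moddist1; lia.
Qed.

Lemma cmin_halves n : 1 < n -> cmin n = cmin (uphalf n) + cmin n./2 + odd n.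
Proof.
rewrite -half_gt0 uphalf_half -[in LHS](odd_double_half n) -mul2n => half_gt0.
case: (odd n); rewrite /= ?add0n ?add1n ?cmin_odd ?cmin_double //; lia.
Qed.

Section CminSplit.

Variable s : nat.
Hypothesis IH :
  forall a b, a + b < s -> cmin (a + b) <= cmin a + cmin b + `|a - b|.

Lemma cmin_succ_le x : 0 < x -> x.+1 < s -> cmin x.+1 <= cmin x + (x - 1).
Proof. by move=> x_gt0; rewrite -addn1 => /IH; rewrite cmin1 addn1; lia. Qed.

Lemma cmin_split_even_even x y : 2 * x + 2 * y = s ->
  cmin (2 * x + 2 * y) <= cmin (2 * x) + cmin (2 * y) + `|2 * x - 2 * y|.
Proof.
move=> xy_s; rewrite -mulnDr !cmin_double.
have [xy0|xy_gt0] := posnP (x + y); first by rewrite xy0 cmin0.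
have /IH : x + y < s by lia.
lia.
Qed.

Lemma cmin_split_even_odd x y : 2 * x + (2 * y).+1 = s ->
  cmin (2 * x + (2 * y).+1)
    <= cmin (2 * x) + cmin (2 * y).+1 + `|2 * x - (2 * y).+1|.
Proof.
move=> xy_s; have [->|x_gt0] := posnP x; first by rewrite muln0 add0n cmin0; lia.
rewrite addnS -mulnDr cmin_odd ?addn_gt0 ?x_gt0 // cmin_double.
have [y0|y_gt0] := posnP y.
  have := @cmin_succ_le x x_gt0; rewrite y0 muln0 addn0 cmin1; lia.
have /IH : x + y < s by lia.
have /IH : x + y.+1 < s by lia.
rewrite cmin_odd // addnS; lia.
Qed.

Lemma cmin_split_odd_odd x y : (2 * x).+1 + (2 * y).+1 = s ->
  cmin ((2 * x).+1 + (2 * y).+1)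
    <= cmin (2 * x).+1 + cmin (2 * y).+1 + `|(2 * x).+1 - (2 * y).+1|.
Proof.
move=> xy_s; have -> : (2 * x).+1 + (2 * y).+1 = 2 * (x + y).+1 by lia.
rewrite cmin_double.
have [x0|x_gt0] := posnP x; have [y0|y_gt0] := posnP y.
- by rewrite x0 y0 cmin1.
- have := @cmin_succ_le y y_gt0; rewrite x0 muln0 add0n cmin_odd // cmin1; lia.
- have := @cmin_succ_le x x_gt0; rewrite y0 muln0 addn0 cmin_odd // cmin1; lia.
have /IH : x + y.+1 < s by lia.
have /IH : x.+1 + y < s by lia.
rewrite !cmin_odd // addSn addnS; lia.
Qed.

End CminSplit.

Lemma cmin_addn_le a b : cmin (a + b) <= cmin a + cmin b + `|a - b|.
Proof.
suff split_le s : forall a b, a + b = s ->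
  cmin (a + b) <= cmin a + cmin b + `|a - b| by exact: split_le.
elim/ltn_ind: s => s IHs {}a {}b ab_s.
have IH a' b' : a' + b' < s -> cmin (a' + b') <= cmin a' + cmin b' + `|a' - b'|.
  by move=> lt_s; exact: IHs lt_s _ _ erefl.
rewrite -(odd_double_half a) -(odd_double_half b) -!mul2n in ab_s *.
case: (odd a) (odd b) => [] [] /= in ab_s *; rewrite ?add0n ?add1n in ab_s *.
- exact: cmin_split_odd_odd IH _ _ ab_s.
- have /(@cmin_split_even_odd s IH) : 2 * b./2 + (2 * a./2).+1 = s by rewrite addnC.
  by rewrite addnC; lia.
- exact: cmin_split_even_odd IH _ _ ab_s.
- exact: cmin_split_even_even IH _ _ ab_s.
Qed.

Lemma cmin_le_colless t : cmin (leaves t) <= colless t.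
Proof.
elim: t => [|l IHl r IHr] /=; first by rewrite cmin1.
have := cmin_addn_le (leaves l) (leaves r); lia.
Qed.

Fixpoint balanced (fuel n : nat) : bintree :=
  match fuel with
  | 0 => Leaf
  | fuel.+1 =>
      if n <= 1 then Leaf else Node (balanced fuel (uphalf n)) (balanced fuel n./2)
  end.

Lemma halves_bounds n fuel : 1 < n <= fuel.+1 ->
  0 < uphalf n <= fuel /\ 0 < n./2 <= fuel.
Proof.
move=> /andP[n_gt1 n_le]; have := odd_double_half n; rewrite uphalf_half -mul2n.
case: (odd n) => /=; lia.
Qed.

Lemma leaves_balanced fuel n : 0 < n <= fuel -> leaves (balanced fuel n) = n.
Proof.
elim: fuel n => [|fuel IH] n n_bd /=; first by lia.
case: leqP => n_gt1 /=; first by lia.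
have [/IH -> /IH ->] : 0 < uphalf n <= fuel /\ 0 < n./2 <= fuel.
  by apply: halves_bounds; lia.
by rewrite uphalf_half -addnA addnn odd_double_half.
Qed.

Lemma colless_balanced fuel n : 0 < n <= fuel -> colless (balanced fuel n) = cmin n.
Proof.
elim: fuel n => [|fuel IH] n n_bd /=; first by lia.
case: leqP => n_gt1 /=; first by rewrite (_ : n = 1) ?cmin1 //; lia.
have [hi lo] : 0 < uphalf n <= fuel /\ 0 < n./2 <= fuel.
  by apply: halves_bounds; lia.
rewrite !leaves_balanced // !IH // (@cmin_halves n n_gt1) uphalf_half; lia.
Qed.

Local Open Scope ring_scope.

Lemma sdist_intrD (q : int) (y : rat) :
  0 <= y < 1 -> sdist (q%:~R + y) = Num.min y (1 - y).
Proof.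
move=> /andP[y_ge0 y_lt1]; rewrite /sdist.
have -> : Num.floor (q%:~R + y) = q.
  by apply: floor_def; rewrite intrD; apply/andP; split; lra.
have [->|y_neq0] := eqVneq y 0.
  by rewrite addr0 intrKceil subrr subr0 minxx min_l ?ler01.
have -> : Num.ceil (q%:~R + y) = q + 1.
  by apply: ceil_def; rewrite addrK intrD; apply/andP; split; lra.
by congr Num.min; rewrite ?intrD; lra.
Qed.

Lemma sdist_ratio (N D : nat) :
  (0 < D)%N -> sdist (N%:R / D%:R) * D%:R = (moddist D N)%:R.
Proof.
move=> D_gt0; have D_neq0 : D%:R != 0 :> rat by rewrite pnatr_eq0 -lt0n.
have r_lt : (N %% D < D)%N by rewrite ltn_pmod.
have -> : N%:R / D%:R = (N %/ D)%:Z%:~R + (N %% D)%:R / D%:R :> rat.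
  by rewrite [in LHS](divn_eq N D) natrD natrM mulrDl mulfK.
rewrite sdist_intrD; last first.
  by rewrite divr_ge0 ?ler0n //= ltr_pdivrMr ?ltr0n // mul1r ltr_nat.
rewrite minr_pMl ?ler0n // mulrBl mul1r mulfVK //.
by rewrite -(natrB _ (ltnW r_lt)) -natr_min.
Qed.

Lemma sdist_pow2_term (j n : nat) :
  sdist (2%:Q ^ (- Posz j) * n%:R) / 2%:Q ^ (- Posz j) = (moddist (2 ^ j) n)%:R.
Proof.
rewrite -invr_expz invrK.
have -> : 2%:Q ^ Posz j = (2 ^ j)%:R by rewrite natrX.
by rewrite mulrC [_^-1 * _]mulrC mulrC sdist_ratio ?expn_gt0.
Qed.

Lemma colless_formulaE n : colless_formula n = (cmin n)%:R.
Proof.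
rewrite /colless_formula /cmin -/(kn n); set k := kn n.
rewrite (eq_big_nat _ _ (F2 := fun i => (moddist (2 ^ (k - 1 - i)) n)%:R)); last first.
  move=> i /andP[_ i_lt].
  by rewrite (_ : Posz i - Posz k + 1 = - Posz (k - 1 - i)) ?sdist_pow2_term //; lia.
rewrite big_nat_rev -natr_sum; congr _%:R.
case: k => [|k]; first by rewrite !big_geq.
rewrite big_nat_recl // moddist1 add0n subn1 /=.
by apply: eq_big_nat => i /andP[_ i_lt]; congr (moddist (2 ^ _)); lia.
Qed.

Theorem theorem2 (n : nat) (hn : (1 <= n)%N) (c : nat) :
  min_colless n c -> (c%:R : rat) = colless_formula n.
Proof.
move=> [[t [t_leaves t_colless]] c_min].
have n_bd : (0 < n <= n)%N by rewrite hn leqnn.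
have -> : c = cmin n.
  apply/eqP; rewrite eqn_leq -{1}(@colless_balanced n n n_bd) c_min ?leaves_balanced //.
  by rewrite -t_colless -t_leaves cmin_le_colless.
by rewrite colless_formulaE.
Qed.
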